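(* Let $(G,\cdot)$ be a group and $\psi\in\operatorname{End}(G,\cdot)$ with $\psi([[G,\psi],G])\le Z(G,\cdot)$. Then each of the following maps $G\times G\to G\times G$ defines a set-theoretic non-degenerate solution $(G,r)$ of the Yang--Baxter equation: $$r_1(g,h)=\big(\psi(g)^{-1}h\,\psi(g),\ \psi(g^{-1}h)\,h^{-1}\psi(g)\,g\,\psi(g)^{-1}h\,\psi(h^{-1}g)\big);$$ $$r_2(g,h)=\big(g\,\psi(g)^{-1}h\,\psi(g)\,g^{-1},\ \psi(h)\,g\,\psi(h)^{-1}\big);$$ $$r_3(g,h)=\big(\psi(g)\,h\,\psi(g)^{-1},\ \psi(g)\,h^{-1}\psi(g)^{-1}g\,h\big);$$ $$r_4(g,h)=\big(g\,h\,\psi(h)^{-1}g^{-1}\psi(h),\ \psi(h)^{-1}g\,\psi(h)\big).$$ Moreover $r_1$ and $r_2$ are mutually inverse and they coincide if and only if $(G,\cdot)$ is abelian; $r_3$ and $r_4$ are mutually inverse and they coincide if and only if $g\,\psi(g)^{-1}h\,\psi(g)=h\,\psi(h)^{-1}g\,\psi(h)$ for all $g,h\in G$.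
   Context: All products are in $(G,\cdot)$. For $\psi\in\operatorname{End}(G,\cdot)$, $[g,\psi]=g\cdot\psi(g)^{-1}$ and $[G,\psi]$ is the subgroup generated by these elements; $[x,y]=xyx^{-1}y^{-1}$ and $[A,B]$ is the subgroup generated by $[a,b]$, $a\in A,b\in B$; $Z(G,\cdot)$ is the centre. A set-theoretic solution of the Yang--Baxter equation is a pair $(X,r)$ with $X\neq\emptyset$ and $r\colon X\times X\to X\times X$, $r(x,y)=(\sigma_x(y),\tau_y(x))$, a bijection satisfying $(r\times\mathrm{id}_X)(\mathrm{id}_X\times r)(r\times\mathrm{id}_X)=(\mathrm{id}_X\times r)(r\times\mathrm{id}_X)(\mathrm{id}_X\times r)$; it is non-degenerate if all $\sigma_x$ and $\tau_x$ are bijective. *)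

From mathcomp Require Import all_boot.
Set Implicit Arguments. Unset Strict Implicit. Unset Printing Implicit Defensive.
Local Open Scope group_scope.

Section YBE.
Variable X : Type.
Variable r : X * X -> X * X.

Definition r_id (t : X * X * X) : X * X * X :=
  let: (x, y, z) := t in let: (a, b) := r (x, y) in (a, b, z).
Definition id_r (t : X * X * X) : X * X * X :=
  let: (x, y, z) := t in let: (b, c) := r (y, z) in (x, b, c).

Definition braid_relation : Prop :=
  forall t, r_id (id_r (r_id t)) = id_r (r_id (id_r t)).

Definition sigma_ (x : X) : X -> X := fun y => (r (x, y)).1.
Definition tau_ (y : X) : X -> X := fun x => (r (x, y)).2.

Definition ybe_solution : Prop := bijective r /\ braid_relation.

Definition nondegenerate : Prop :=
  (forall x, bijective (sigma_ x)) /\ (forall y, bijective (tau_ y)).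

Definition nondeg_ybe_solution : Prop := ybe_solution /\ nondegenerate.
End YBE.

Section GroupNotions.
Variable G : groupType.

(* paper's commutator [x, y] = x y x^-1 y^-1 *)
Definition pcomm (x y : G) : G := x * y * x^-1 * y^-1.

Inductive gen (S : G -> Prop) : G -> Prop :=
  | gen_in x : S x -> gen S x
  | gen_one : gen S 1
  | gen_mul x y : gen S x -> gen S y -> gen S (x * y)
  | gen_inv x : gen S x -> gen S x^-1.

Definition commG_psi (psi : G -> G) : G -> Prop :=
  gen (fun k => exists g, k = g * (psi g)^-1).

Definition commSub (A B : G -> Prop) : G -> Prop :=
  gen (fun c => exists a b, A a /\ B b /\ c = pcomm a b).

Definition in_center (z : G) : Prop := forall y, z * y = y * z.

Definition abelian_grp : Prop := forall x y : G, x * y = y * x.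

Variable psi : G -> G.
Definition r1 (p : G * G) : G * G :=
  let: (g, h) := p in
  ((psi g)^-1 * h * psi g,
   psi (g^-1 * h) * h^-1 * psi g * g * (psi g)^-1 * h * psi (h^-1 * g)).
Definition r2 (p : G * G) : G * G :=
  let: (g, h) := p in
  (g * (psi g)^-1 * h * psi g * g^-1, psi h * g * (psi h)^-1).
Definition r3 (p : G * G) : G * G :=
  let: (g, h) := p in
  (psi g * h * (psi g)^-1, psi g * h^-1 * (psi g)^-1 * g * h).
Definition r4 (p : G * G) : G * G :=
  let: (g, h) := p in
  (g * h * (psi h)^-1 * g^-1 * psi h, (psi h)^-1 * g * psi h).
End GroupNotions.

From mathcomp Require Import all_boot.
From Stdlib Require Import FunctionalExtensionality.
Set Implicit Arguments. Unset Strict Implicit. Unset Printing Implicit Defensive.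
Local Open Scope group_scope.

(* Write [inn c] for conjugation [w |-> c w c^-1],
   [lam a := inn (psi a)], [dev g := g psi(g)^-1] (the generators of
   K = [G, psi]) and [mu g := inn (dev g)].  Unfolding, the four maps read
     r3 (g, h) = (lam g h, (lam g h)^-1 g h),
     r4 (g, h) = (g h (lam h^-1 g)^-1, lam h^-1 g),
     r2 (g, h) = (mu g h, lam h g),
     r1 (g, h) = (lam g^-1 h, inn (lam g^-1 (dev h))^-1 g).
   The hypothesis psi([K, G]) <= Z(G) enters only through two facts: K is
   normal, and lam (k b k^-1) = lam b for k in K.  Since
   lam a b = a (mu a^-1 b) a^-1 with dev a^-1 in K, this yields the key
   identity lam (lam a b) = lam a o lam b o (lam a)^-1, and also that
   dev (lam a b) equals lam a (dev b) up to a central factor.  From these,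
   r3 and r2 satisfy the braid relation by direct computation; r4 and r1 are
   their two-sided inverses, and the inverse of a braided bijection is braided
   (a general fact proved first).  Non-degeneracy is shown by exhibiting the
   inverses of all sigma_x and tau_y, and the two equality criteria follow
   from the key identity. *)

Ltac group_simpl := rewrite ?invgM ?invgK ?invg1 ?mulgA;
  rewrite ?(mulgK, mulgVK, mulgV, mulVg, mul1g, mulg1).

Section BraidedInverse.
Variables (X : Type) (r r' : X * X -> X * X).
Hypotheses (rK : cancel r r') (r'K : cancel r' r).

Lemma r_idK : cancel (r_id r) (r_id r').
Proof. by move=> [[x y] z] /=; case E: (r (x, y)) => [a b] /=; rewrite -E rK. Qed.

Lemma id_rK : cancel (id_r r) (id_r r').
Proof. by move=> [[x y] z] /=; case E: (r (y, z)) => [a b] /=; rewrite -E rK. Qed.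

Lemma r_id'K : cancel (r_id r') (r_id r).
Proof. by move=> [[x y] z] /=; case E: (r' (x, y)) => [a b] /=; rewrite -E r'K. Qed.

Lemma id_r'K : cancel (id_r r') (id_r r).
Proof. by move=> [[x y] z] /=; case E: (r' (y, z)) => [a b] /=; rewrite -E r'K. Qed.

(* The inverse of a bijective solution of the braid relation is again one:
   invert both sides of the braid identity. *)
Lemma braid_inv : braid_relation r -> braid_relation r'.
Proof.
move=> braid_r t; set u := r_id r' (id_r r' (r_id r' t)).
have -> : t = r_id r (id_r r (r_id r u)) by rewrite /u r_id'K id_r'K r_id'K.
by rewrite braid_r id_rK r_idK id_rK.
Qed.

Lemma nondeg_solution_pair :
  braid_relation r -> nondegenerate r -> nondegenerate r' ->
  nondeg_ybe_solution r /\ nondeg_ybe_solution r'.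
Proof.
move=> braid_r nd_r nd_r'; split; split=> //; split.
- by exists r'.
- exact: braid_r.
- by exists r.
- exact: braid_inv.
Qed.
End BraidedInverse.

Section InnerAutomorphisms.
Variable G : groupType.
Implicit Types c w x y z : G.

(* Conjugation in the paper's convention, w |-> c w c^-1. *)
Definition inn c w : G := c * w * c^-1.

Lemma innM c x y : inn c (x * y) = inn c x * inn c y.
Proof. by rewrite /inn; group_simpl. Qed.

Lemma innV c x : inn c x^-1 = (inn c x)^-1.
Proof. by rewrite /inn; group_simpl. Qed.

Lemma inn_mul x y w : inn (x * y) w = inn x (inn y w).
Proof. by rewrite /inn; group_simpl. Qed.

Lemma innK c : cancel (inn c) (inn c^-1).
Proof. by move=> w; rewrite /inn; group_simpl. Qed.

Lemma innVK c : cancel (inn c^-1) (inn c).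
Proof. by move=> w; rewrite /inn; group_simpl. Qed.

Lemma inn_inn c y w : inn (inn c y) w = inn c (inn y (inn c^-1 w)).
Proof. by rewrite /inn; group_simpl. Qed.

Lemma inn_pcomm c b : inn c b = pcomm c b * b.
Proof. by rewrite /inn /pcomm mulgVK. Qed.

Lemma inn_center z w : in_center z -> inn z w = w.
Proof. by move=> Zz; rewrite /inn Zz mulgK. Qed.

Lemma centerV z : in_center z -> in_center z^-1.
Proof. by move=> Zz y; apply: (mulgI z); rewrite mulVKg mulgA Zz mulgK. Qed.

Lemma inn_mulZ z x w : in_center z -> inn (x * z) w = inn x w.
Proof. by move=> Zz; rewrite inn_mul (inn_center _ Zz). Qed.

Lemma inn_Zmul z x w : in_center z -> inn (z * x) w = inn x w.
Proof. by move=> Zz; rewrite inn_mul (inn_center _ Zz). Qed.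

Lemma inn_abelian c w : abelian_grp G -> inn c w = w.
Proof. by move=> abG; rewrite /inn (abG c w) mulgK. Qed.
End InnerAutomorphisms.

Section Solutions.
Variables (G : groupType) (psi : G -> G).
Hypothesis psi_morph : monoid_morphism psi.
Hypothesis psi_comm_central :
  forall x, commSub (commG_psi psi) (fun _ => True) x -> in_center (psi x).
Implicit Types a b g h k w x y z : G.

Lemma psiM x y : psi (x * y) = psi x * psi y. Proof. exact: psi_morph.2. Qed.

Lemma psiV x : psi x^-1 = (psi x)^-1.
Proof. by apply: (mulgI (psi x)); rewrite -psiM !mulgV psi_morph.1. Qed.

Definition lam a w := inn (psi a) w.
Definition dev g := g * (psi g)^-1.
Local Notation K := (commG_psi psi).

Lemma lamM a x y : lam a (x * y) = lam a x * lam a y. Proof. exact: innM. Qed.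
Lemma lamV a x : lam a x^-1 = (lam a x)^-1. Proof. exact: innV. Qed.
Lemma lam_mul a b w : lam (a * b) w = lam a (lam b w).
Proof. by rewrite /lam psiM inn_mul. Qed.
Lemma lamK a : cancel (lam a) (lam a^-1).
Proof. by move=> w; rewrite /lam psiV innK. Qed.
Lemma lamVK a : cancel (lam a^-1) (lam a).
Proof. by move=> w; rewrite /lam psiV innVK. Qed.
Lemma lam_center a z : in_center z -> lam a z = z.
Proof. by move=> Zz; rewrite /lam /inn -(Zz (psi a)) mulgK. Qed.

Lemma lam_eqV a b : (forall w, lam a w = lam b w) -> forall w, lam a^-1 w = lam b^-1 w.
Proof. by move=> eq_ab w; rewrite -[in LHS](lamVK b w) -eq_ab lamK. Qed.

Lemma K_dev g : K (dev g). Proof. by apply: gen_in; exists g. Qed.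

Lemma K_inn x k : K k -> K (inn x k).
Proof.
elim=> [y [g ->]| | a b _ Ka _ Kb | a _ Ka].
- have -> : inn x (g * (psi g)^-1) = dev (x * g) * (dev x)^-1.
    by rewrite /inn /dev psiM; group_simpl.
  by apply: gen_mul; [apply: K_dev | apply: gen_inv; apply: K_dev].
- by rewrite /inn mulg1 mulgV; apply: gen_one.
- by rewrite innM; apply: gen_mul.
- by rewrite innV; apply: gen_inv.
Qed.

Lemma K_lam_dev a g : K (lam a (dev g)). Proof. exact/K_inn/K_dev. Qed.

Lemma psi_pcomm_central k b : K k -> in_center (psi (pcomm k b)).
Proof. by move=> Kk; apply: psi_comm_central; apply: gen_in; exists k, b. Qed.

Lemma lam_innK k b w : K k -> lam (inn k b) w = lam b w.
Proof.
move=> Kk; rewrite inn_pcomm lam_mul {1}/lam inn_center //.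
exact: psi_pcomm_central.
Qed.

Lemma lam_innKV k b w : K k -> lam (inn k b)^-1 w = lam b^-1 w.
Proof. by move=> Kk; rewrite -innV lam_innK. Qed.

Lemma lam_dev a b : lam a b = a * inn (dev a^-1) b * a^-1.
Proof. by rewrite /lam /dev /inn psiV; group_simpl. Qed.

Lemma lam_lam a b w : lam (lam a b) w = lam a (lam b (lam a^-1 w)).
Proof. by rewrite [lam a b]lam_dev 2!lam_mul lam_innK //; apply: K_dev. Qed.

Lemma psi_lam a b : exists2 z, in_center z & psi (lam a b) = z * lam a (psi b).
Proof.
set z := psi (pcomm (dev a^-1) b).
have Zz : in_center z by apply: psi_pcomm_central; apply: K_dev.
exists z => //.
rewrite [lam a b]lam_dev inn_pcomm psiM (psiM a) (psiM (pcomm _ _)) psiV -/z.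
by rewrite /lam /inn !mulgA -(Zz (psi a)).
Qed.

Lemma dev_lam a b : exists2 z, in_center z & dev (lam a b) = lam a (dev b) * z.
Proof.
have [z Zz E] := psi_lam a b; exists z^-1; first exact: centerV.
by rewrite /dev E lamM lamV invgM mulgA.
Qed.

Lemma inn_dev a w : inn (dev a) w = inn a (lam a^-1 w).
Proof. by rewrite /lam /inn /dev psiV; group_simpl. Qed.

Lemma lam_inn_dev a b w : lam (inn (dev a) b) w = lam b w.
Proof. exact/lam_innK/K_dev. Qed.

(* lam a is an automorphism, hence intertwines conjugations. *)
Lemma inn_lam a b q : inn (lam a b) (lam a q) = lam a (inn b q).
Proof. by rewrite /lam /inn; group_simpl. Qed.

Definition s1 (p : G * G) : G * G :=
  let: (g, h) := p in (lam g^-1 h, inn (lam g^-1 (dev h))^-1 g).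
Definition s2 (p : G * G) : G * G :=
  let: (g, h) := p in (inn (dev g) h, lam h g).
Definition s3 (p : G * G) : G * G :=
  let: (g, h) := p in (lam g h, (lam g h)^-1 * g * h).
Definition s4 (p : G * G) : G * G :=
  let: (g, h) := p in (g * h * (lam h^-1 g)^-1, lam h^-1 g).

Lemma r1E : r1 psi = s1.
Proof.
apply: functional_extensionality => -[g h].
by rewrite /r1 /s1 /lam /inn /dev !psiM !psiV; group_simpl.
Qed.

Lemma r2E : r2 psi = s2.
Proof.
by apply: functional_extensionality => -[g h]; rewrite /r2 /s2 /lam /inn /dev; group_simpl.
Qed.

Lemma r3E : r3 psi = s3.
Proof.
by apply: functional_extensionality => -[g h]; rewrite /r3 /s3 /lam /inn; group_simpl.
Qed.

Lemma r4E : r4 psi = s4.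
Proof.
by apply: functional_extensionality => -[g h]; rewrite /r4 /s4 /lam /inn psiV; group_simpl.
Qed.

Lemma lam_s3 x y w : lam ((lam x y)^-1 * x * y) w = lam x w.
Proof. by rewrite !lam_mul -lamV lam_lam lamK lamK. Qed.

Lemma lam_s3V x y w : lam ((lam x y)^-1 * x * y)^-1 w = lam x^-1 w.
Proof. exact/lam_eqV/lam_s3. Qed.

Lemma lam_s4 g h w : lam (g * h * (lam h^-1 g)^-1) w = lam h w.
Proof. by rewrite -lamV 2!lam_mul lam_lam invgK !lamVK. Qed.

Lemma braid3 : braid_relation s3.
Proof.
move=> [[x y] z] /=.
rewrite !lam_s3 lam_lam lamK [lam x (_ * z)]lamM [lam x (_ * y)]lamM lamV.
by congr (_, _, _); group_simpl.
Qed.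

Lemma inn_dev_lam y x z : inn (dev (lam y x)) z = lam y (inn (dev x) (lam y^-1 z)).
Proof. by rewrite !inn_dev -lamV lam_lam inn_lam. Qed.

Lemma inn_dev_inn x y w :
  inn (dev (inn (dev x) y)) w = inn (dev x) (inn y (inn (dev x)^-1 (lam y^-1 w))).
Proof. by rewrite inn_dev -innV lam_inn_dev inn_inn. Qed.

Lemma braid2 : braid_relation s2.
Proof.
move=> [[x y] z] /=; congr (_, _, _).
- by rewrite inn_dev_inn inn_dev_lam lamK innK -inn_dev.
- by rewrite !lam_inn_dev inn_dev_lam lamK.
- by rewrite lam_inn_dev lam_lam lamK.
Qed.

(* s1 and s2 are mutually inverse; the central factor of dev_lam is
   invisible to conjugation. *)
Lemma s1K : cancel s1 s2.
Proof.
move=> [g h] /=; congr (_, _).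
- by have [z Zz ->] := dev_lam g^-1 h; rewrite (inn_mulZ _ _ Zz) innVK.
- by rewrite lam_innK ?lamVK //; apply/gen_inv/K_lam_dev.
Qed.

Lemma s2K : cancel s2 s1.
Proof.
move=> [g h] /=; rewrite !(lam_innKV _ _ (K_dev g)) lamK; congr (_, _).
have [z Zz ->] := dev_lam h g.
by rewrite lamM lamK (lam_center _ Zz) invgM (inn_Zmul _ _ (centerV Zz)) innK.
Qed.

Lemma s3K : cancel s3 s4.
Proof. by move=> [g h] /=; rewrite lam_s3V lamK; congr (_, _); group_simpl. Qed.

Lemma s4K : cancel s4 s3.
Proof.
move=> [g h] /=.
have -> : lam (g * h * (lam h^-1 g)^-1) (lam h^-1 g) = g by rewrite lam_s4 lamVK.
by congr (_, _); group_simpl.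
Qed.

Lemma nondeg1 : nondegenerate s1.
Proof.
split=> y.
- by exists (lam y) => x; rewrite /sigma_ /= ?lamK ?lamVK.
- exists (fun w => inn (lam w^-1 (dev y)) w) => x; rewrite /tau_ /=.
  + by rewrite lam_innKV ?innVK //; apply/gen_inv/K_lam_dev.
  + by rewrite lam_innKV ?innK //; apply: K_lam_dev.
Qed.

Lemma nondeg2 : nondegenerate s2.
Proof.
split=> y.
- by exists (inn (dev y)^-1) => x; rewrite /sigma_ /= ?innK ?innVK.
- by exists (lam y^-1) => x; rewrite /tau_ /= ?lamK ?lamVK.
Qed.

Lemma nondeg3 : nondegenerate s3.
Proof.
split=> y.
- by exists (lam y^-1) => x; rewrite /sigma_ /= ?lamK ?lamVK.
- exists (fun w => lam w y * w * y^-1) => x; rewrite /tau_ /=.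
  + by rewrite lam_s3; group_simpl.
  + by rewrite 2!lam_mul lam_lam lamK lamVK; group_simpl.
Qed.

Lemma nondeg4 : nondegenerate s4.
Proof.
split=> g.
- have lam_inv h w : lam (g^-1 * h * lam h^-1 g) w = lam h w.
    by rewrite 2!lam_mul lam_lam invgK lamVK lamK.
  exists (fun v => g^-1 * v * lam v^-1 g) => h; rewrite /sigma_ /=.
  + by rewrite (lam_eqV (lam_s4 g h)); group_simpl.
  + by rewrite (lam_eqV (lam_inv h)); group_simpl.
- by exists (lam g) => x; rewrite /tau_ /= ?lamK ?lamVK.
Qed.

(* At the point (x, lam x y) the first components are y and x y x^-1, so
   s1 = s2 forces G to be abelian. *)
Lemma s1_eq_s2 : (forall p, s1 p = s2 p) <-> abelian_grp G.
Proof.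
split=> [eq12 x y | abG [g h]]; last by rewrite /s1 /s2 /lam !(inn_abelian _ _ abG).
move: (eq12 (x, lam x y)) => /= /(congr1 fst) /=.
by rewrite lamK inn_dev lamK => E; rewrite {2}E /inn mulgVK.
Qed.

Lemma s3_eq_s4 : (forall p, s3 p = s4 p) <-> (forall g h, lam g h * lam h^-1 g = g * h).
Proof.
split=> [eq34 g h | E [g h] /=].
- by move: (eq34 (g, h)) => /= /(congr1 fst) /= ->; rewrite mulgVK.
- by congr (_, _); [rewrite -(E g h) mulgK | rewrite -mulgA -(E g h) mulKg].
Qed.

Lemma dev_form g h : g * (psi g)^-1 * h * psi g = g * lam g^-1 h.
Proof. by rewrite /lam /inn psiV; group_simpl. Qed.

Lemma lam_commute_of_s3 : (forall g h, lam g h * lam h^-1 g = g * h) ->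
  forall a b w, lam a (lam b w) = lam b (lam a w).
Proof.
move=> E a b w.
have inv_comm w' : lam a^-1 (lam b^-1 (lam a (lam b w'))) = w'.
  have := congr1 (fun v => lam v w') (E a b).
  rewrite /= (lam_mul (lam a b)) (lam_mul a b) lam_lam lam_lam invgK => Y.
  by have := congr1 (fun v => lam b^-1 (lam a^-1 v)) Y; rewrite /= !lamK.
by have := congr1 (fun v => lam b (lam a v)) (inv_comm w); rewrite /= !lamVK.
Qed.

Lemma lam_commute_of_dev : (forall g h, g * lam g^-1 h = h * lam h^-1 g) ->
  forall a b w, lam a (lam b w) = lam b (lam a w).
Proof.
move=> C a b w; have := congr1 (fun v => lam v w) (C a b).
by rewrite /= (lam_mul a) (lam_mul b) !lam_lam !invgK !lamVK => ->.
Qed.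

Lemma s3_eq_s4_criterion : (forall p, s3 p = s4 p) <->
  (forall g h, g * (psi g)^-1 * h * psi g = h * (psi h)^-1 * g * psi h).
Proof.
apply: iff_trans s3_eq_s4 _; split=> [E g h | C0 g h]; rewrite ?dev_form.
- have comm := lam_commute_of_s3 E.
  by rewrite -(E h (lam h^-1 g)) lamVK -lamV lam_lam invgK (comm h^-1) lamK.
- have C g' h' : g' * lam g'^-1 h' = h' * lam h'^-1 g' by rewrite -!dev_form.
  have comm := lam_commute_of_dev C.
  by have := C (lam g h) g; rewrite lamK -lamV lam_lam (comm h^-1) lamVK => ->.
Qed.
End Solutions.

Theorem mainTheorem6 (G : groupType) (psi : G -> G) :
  monoid_morphism psi ->
  (forall x, commSub (commG_psi psi) (fun _ => True) x -> in_center (psi x)) ->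
  nondeg_ybe_solution (r1 psi) /\ nondeg_ybe_solution (r2 psi) /\
      nondeg_ybe_solution (r3 psi) /\ nondeg_ybe_solution (r4 psi) /\
      (cancel (r1 psi) (r2 psi) /\ cancel (r2 psi) (r1 psi)) /\
      ((forall p, r1 psi p = r2 psi p) <-> abelian_grp G) /\
      (cancel (r3 psi) (r4 psi) /\ cancel (r4 psi) (r3 psi)) /\
      ((forall p, r3 psi p = r4 psi p) <->
         (forall g h : G, g * (psi g)^-1 * h * psi g = h * (psi h)^-1 * g * psi h)).
Proof.
move=> psi_morph psi_comm.
rewrite (r1E psi_morph) r2E r3E (r4E psi_morph).
have [sol2 sol1] := nondeg_solution_pair (s2K psi_morph psi_comm)
  (s1K psi_morph psi_comm) (braid2 psi_morph psi_comm)
  (nondeg2 psi_morph) (nondeg1 psi_morph psi_comm).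
have [sol3 sol4] := nondeg_solution_pair (s3K psi_morph psi_comm)
  (s4K psi_morph psi_comm) (braid3 psi_morph psi_comm)
  (nondeg3 psi_morph psi_comm) (nondeg4 psi_morph psi_comm).
split=> //; split=> //; split=> //; split=> //.
split; first by split; [exact: s1K | exact: s2K].
split; first exact: s1_eq_s2.
split; first by split; [exact: s3K | exact: s4K].
exact: s3_eq_s4_criterion.
Qed.
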